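(* Let $\lambda\in P_+$, $\beta\in Q_+$ and let $x$ be a nilpotent $\Lambda$-submodule of $q_\lambda$ of dimension vector $\beta$. Then for every $i\in I$, $$\varphi_i(x)-\varepsilon_i(x)=(\lambda-\beta;\alpha_i).$$
   Context: $\Gamma$ is a finite graph without loops with vertex set $I$; $\mathfrak g$ is the associated symmetric Kac–Moody algebra with simple roots $\alpha_i$, symmetric bilinear form $(-;-)$ with $(\alpha_i;\alpha_j)=a_{ij}$ ($a_{ii}=2$, $-a_{ij}$ the number of edges between $i\neq j$), $P_+$ the dominant integral weights, $Q_+=\bigoplus\mathbb N\alpha_i$. $\Lambda$ is the preprojective algebra of $\Gamma$ over $\mathbb C$, $s_i$ the simple module at $i$, $q_i$ its injective hull, $q_\lambda=\bigoplus_i q_i^{\oplus(\lambda;\alpha_i)}$. A finite-dimensional module is nilpotent if its composition factors are among the $s_i$; its dimension vector lies in $Q_+$ with $\dim s_i=\alpha_i$. $\varepsilon_i(x)$ is the multiplicity of $s_i$ in the head of $x$, and $\varphi_i(x)$ the multiplicity of $s_i$ in the socle of $q_\lambda/x$. *)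

From HB Require Import structures.
From mathcomp Require Import all_boot all_order all_algebra.
From mathcomp Require Import complex.
From mathcomp Require Import reals.

Set Implicit Arguments.
Unset Strict Implicit.
Unset Printing Implicit Defensive.

Import Order.TTheory GRing.Theory Num.Theory.
Local Open Scope ring_scope.

(* The graph Gamma: vertex set I, edge set E, every edge e is given (with an
   arbitrary auxiliary orientation) by its endpoints s e, t e with s e != t e
   (no loops; multiple edges allowed).
   Arrows of the double quiver: (true, e) = a_e : s e -> t e,
                                (false, e) = a_e^* : t e -> s e. *)

Section Preproj.
Variables (K : fieldType) (I E : finType) (s t : E -> I).

Definition asrc (a : bool * E) : I := if a.1 then s a.2 else t a.2.
Definition atgt (a : bool * E) : I := if a.1 then t a.2 else s a.2.

Definition cartan (i j : I) : int :=
  if i == j then 2%:Z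
  else - (#|[set e | ((s e == i) && (t e == j)) || ((s e == j) && (t e == i))]|)%:Z.

(* A (possibly infinite-dimensional) module over the preprojective algebra
   Lambda of Gamma over K, written as a representation of the double quiver
   on the total space  M = (+)_i M_i : ridem i is the projection onto M_i,
   rarr a is the action of the arrow a (zero outside M_(asrc a)), and the
   preprojective relations  sum_{t e = i} a_e a_e^* - sum_{s e = i} a_e^* a_e = 0
   hold at every vertex i. *)
Record pmod := PMod {
  pcar :> lmodType K;
  ridem : I -> {linear pcar -> pcar};
  rarr : bool * E -> {linear pcar -> pcar};
  ridem_idem : forall i v, ridem i (ridem i v) = ridem i v;
  ridem_orth : forall i j v, i != j -> ridem i (ridem j v) = 0;
  ridem_sum : forall v, \sum_i ridem i v = v;
  rarr_supp : forall a v, rarr a v = ridem (atgt a) (rarr a (ridem (asrc a) v));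
  preproj_rel : forall i v,
    \sum_(e | t e == i) rarr (true, e) (rarr (false, e) (ridem i v))
    - \sum_(e | s e == i) rarr (false, e) (rarr (true, e) (ridem i v)) = 0
}.

Definition path_act (M : pmod) (p : seq (bool * E)) (v : M) : M :=
  foldr (fun a w => rarr M a w) v p.

Definition loc_nilpotent (M : pmod) : Prop :=
  forall v : M, exists N, forall p, size p = N -> path_act p v = 0.

Definition is_hom (A B : pmod) (f : {linear A -> B}) : Prop :=
  (forall i v, f (ridem A i v) = ridem B i (f v)) /\
  (forall a v, f (rarr A a v) = rarr B a (f v)).

Definition ln_injective (Q : pmod) : Prop :=
  forall (A B : pmod) (f : {linear A -> B}) (g : {linear A -> Q}),
    loc_nilpotent A -> loc_nilpotent B ->
    is_hom f -> injective f -> is_hom g ->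
    exists h : {linear B -> Q}, is_hom h /\ forall v, h (f v) = g v.

(* dim_quot V S T n : S, T subspaces (T inside S) of the K-space V and
   dim (S / T) = n, i.e. there are n vectors of S, linearly independent
   modulo T, spanning S modulo T. *)
Definition dim_quot (V : lmodType K) (S T : V -> Prop) (n : nat) : Prop :=
  exists w : 'I_n -> V,
    (forall k, S (w k)) /\
    (forall c : 'I_n -> K, T (\sum_k c k *: w k) -> forall k, c k = 0) /\
    (forall v, S v -> exists c : 'I_n -> K, T (v - \sum_k c k *: w k)).

Definition zero_sp (V : lmodType K) : V -> Prop := fun v => v = 0.

(* the vertex-i part of the socle of M: vectors of M_i killed by all arrows;
   its dimension is the multiplicity of s_i in soc M *)
Definition soc_at (M : pmod) (i : I) : M -> Prop :=
  fun v => ridem M i v = v /\ forall a, rarr M a v = 0.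

Definition submodule (M : pmod) (X : M -> Prop) : Prop :=
  [/\ X 0, (forall u v, X u -> X v -> X (u + v)),
      (forall (c : K) v, X v -> X (c *: v)),
      (forall i v, X v -> X (ridem M i v)) &
      (forall a v, X v -> X (rarr M a v))].

Definition sub_nilpotent (M : pmod) (X : M -> Prop) : Prop :=
  exists N, forall p v, size p = N -> X v -> path_act p v = 0.

Definition sub_at (M : pmod) (X : M -> Prop) (i : I) : M -> Prop :=
  fun v => X v /\ ridem M i v = v.

(* radical J X of X (J = arrow ideal); X / rad X is the head of X *)
Definition rad_sub (M : pmod) (X : M -> Prop) : M -> Prop :=
  fun v => exists w : bool * E -> M,
    (forall a, X (w a)) /\ v = \sum_a rarr M a (w a).

(* vertex-i part of the socle of M / X, as vectors of M_i (modulo X_i) whose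
   images under all arrows lie in X *)
Definition soc_quot_at (M : pmod) (X : M -> Prop) (i : I) : M -> Prop :=
  fun v => ridem M i v = v /\ forall a, X (rarr M a v).

End Preproj.

Arguments soc_at {K I E s t} M i _.

(* The identity is the Euler characteristic of an exact sequence. Let S be the
   preimage in Q_i of the vertex-i part of soc(Q/X); then
     0 -> soc(Q)_i -> S -> (+)_(a : i -> j) X_j -> X_i -> (X / J X)_i -> 0
   is exact, where v in S goes to (a v)_a and (w_a) goes to the combination of the
   a* w_a prescribed by the preprojective relation at i. Exactness at the middle is
   where injectivity of Q enters: a family killed by the relation defines an
   extension of Q by the simple module at i, which splits, and the splitting gives
   v in S with a v = w_a for every a. Counting dimensions,
     phi - eps = lam_i - 2 beta_i + sum_(a : i -> j) beta_j = lam_i - (beta; alpha_i). *)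

From HB Require Import structures.
From mathcomp Require Import all_boot all_order all_algebra.
From mathcomp Require Import complex reals.
From mathcomp Require Import zify.
From Stdlib Require Import Classical.
Import GRing.Theory.
Set Implicit Arguments.
Unset Strict Implicit.
Unset Printing Implicit Defensive.
Local Open Scope ring_scope.

Section Subspaces.
Variable K : fieldType.

Definition subspace (V : lmodType K) (S : V -> Prop) : Prop :=
  [/\ S 0, (forall u v, S u -> S v -> S (u + v)) & (forall (c : K) v, S v -> S (c *: v))].

Definition has_dim (V : lmodType K) (S : V -> Prop) (n : nat) : Prop :=
  dim_quot S (@zero_sp K V) n.

Lemma subspace_sum (V : lmodType K) (S : V -> Prop) (J : finType) (F : J -> V) :
  subspace S -> (forall j, S (F j)) -> S (\sum_j F j).
Proof. by case=> S0 SD _ SF; elim/big_ind: _ => // j _; apply: SF. Qed.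

Lemma subspace_lincomb (V : lmodType K) (S : V -> Prop) n (b : 'I_n -> V) (c : 'I_n -> K) :
  subspace S -> (forall k, S (b k)) -> S (\sum_k c k *: b k).
Proof. by move=> SS Sb; apply: subspace_sum => // k; case: SS => _ _; apply. Qed.

Lemma subspaceB (V : lmodType K) (S : V -> Prop) u v :
  subspace S -> S u -> S v -> S (u - v).
Proof. by case=> _ SD SZ Su Sv; apply: SD => //; rewrite -scaleN1r; apply: SZ. Qed.

Lemma has_dimP (V : lmodType K) (S : V -> Prop) n : has_dim S n ->
  exists b : 'I_n -> V, [/\ forall k, S (b k),
     (forall c : 'I_n -> K, \sum_k c k *: b k = 0 -> forall k, c k = 0) &
     (forall v, S v -> exists c : 'I_n -> K, v = \sum_k c k *: b k)].
Proof.
case=> b [Sb [b_free b_span]]; exists b; split => // v /b_span [c vc]; exists c.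
by apply/eqP; rewrite -subr_eq0; apply/eqP.
Qed.

Lemma has_dim_basis (V : lmodType K) (S : V -> Prop) n (b : 'I_n -> V) :
  (forall k, S (b k)) ->
  (forall c : 'I_n -> K, \sum_k c k *: b k = 0 -> forall k, c k = 0) ->
  (forall v, S v -> exists c : 'I_n -> K, v = \sum_k c k *: b k) -> has_dim S n.
Proof.
move=> Sb b_free b_span; exists b; do 2!split => //.
by move=> v /b_span [c ->]; exists c; rewrite /zero_sp subrr.
Qed.

Lemma eq_has_dim (V : lmodType K) (S S' : V -> Prop) n :
  (forall v, S v <-> S' v) -> has_dim S n -> has_dim S' n.
Proof.
move=> SS' /has_dimP [b [Sb b_free b_span]].
by apply: (has_dim_basis (b := b)) => // [k | v /SS']; [apply/SS' | apply: b_span].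
Qed.

Lemma has_dim0 (V : lmodType K) : has_dim (@zero_sp K V) 0.
Proof.
apply: (has_dim_basis (b := fun _ => 0)) => [[] // | c _ [] // | v ->].
by exists (fun _ => 0); rewrite big_ord0.
Qed.

Section Coordinates.
Variables (V : lmodType K) (n : nat) (b : 'I_n -> V).

Definition lincomb (r : 'rV[K]_n) : V := \sum_k r 0 k *: b k.

Fact lincomb_is_linear : linear lincomb.
Proof.
move=> a r1 r2; rewrite /lincomb scaler_sumr -big_split.
by apply: eq_bigr => k _; rewrite !mxE scalerDl scalerA.
Qed.

HB.instance Definition _ :=
  GRing.isLinear.Build K 'rV[K]_n V *:%R lincomb lincomb_is_linear.

Lemma lincombE (c : 'I_n -> K) : \sum_k c k *: b k = lincomb (\row_k c k).
Proof. by apply: eq_bigr => k _; rewrite mxE. Qed.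

Lemma lincomb_mul m (c : 'I_m -> K) (A : 'M_(m, n)) :
  lincomb (\row_l c l *m A) = \sum_l c l *: lincomb (row l A).
Proof.
rewrite /lincomb; under [RHS]eq_bigr do rewrite scaler_sumr.
rewrite exchange_big /=; apply: eq_bigr => k _; rewrite mxE scaler_suml.
by apply: eq_bigr => l _; rewrite !mxE scalerA.
Qed.

End Coordinates.

Lemma leq_free_span (V : lmodType K) (S : V -> Prop) n m (b : 'I_n -> V) (b' : 'I_m -> V) :
  (forall v, S v -> exists c : 'I_n -> K, v = \sum_k c k *: b k) ->
  (forall k, S (b' k)) ->
  (forall c : 'I_m -> K, \sum_k c k *: b' k = 0 -> forall k, c k = 0) -> (m <= n)%N.
Proof.
move=> b_span Sb' b'_free.
have [C b'E] := fin_all_exists (fun k => b_span _ (Sb' k)).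
pose A := \matrix_(k, l) C k l.
suff /eqP <- : row_free A by exact: rank_leq_col.
apply/inj_row_free => d dA; apply/rowP => k; rewrite mxE.
have dE : d = \row_k d 0 k by apply/rowP => l; rewrite mxE.
apply: (b'_free (fun k => d 0 k)).
transitivity (lincomb b (d *m A)); last by rewrite dA linear0.
rewrite [in RHS]dE lincomb_mul; apply: eq_bigr => l _.
rewrite b'E lincombE; congr (_ *: lincomb _ _).
by apply/rowP => j; rewrite !mxE.
Qed.

Lemma has_dim_uniq (V : lmodType K) (S : V -> Prop) n m : has_dim S n -> has_dim S m -> n = m.
Proof.
move=> /has_dimP [b [Sb b_free b_span]] /has_dimP [b' [Sb' b'_free b'_span]].
by apply/eqP; rewrite eqn_leq (leq_free_span b'_span Sb b_free) (leq_free_span b_span Sb' b'_free).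
Qed.

Lemma rV_subspace_mx n (P : 'rV[K]_n -> Prop) :
  subspace P -> exists M : 'M[K]_n, forall u, P u <-> (u <= M)%MS.
Proof.
case=> P0 PD PZ.
(* Enlarge A by vectors of P outside its row space; n - \rank A bounds the steps. *)
suff: forall d (A : 'M[K]_n), (forall u, (u <= A)%MS -> P u) -> (n - \rank A <= d)%N ->
    exists M : 'M[K]_n, forall u, P u <-> (u <= M)%MS.
  by move/(_ n 0); apply=> [u | ]; [rewrite submx0 => /eqP -> | rewrite leq_subr].
elim=> [|d IHd] A PA rkA.
  exists A => u; split => [_|]; last exact: PA.
  by apply: submx_full; rewrite /row_full eqn_leq rank_leq_col /= -subn_eq0 -leqn0.
case: (classic (forall u, P u -> (u <= A)%MS)) => [AP | /not_all_ex_not [u]].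
  by exists A => u; split => [/AP | /PA].
move=> nPA; have Pu := not_imply_elim _ _ nPA; have uA := not_imply_elim2 _ _ nPA.
apply: (IHd (A + u)%MS).
  move=> v /sub_addsmxP [[x y] /= ->]; apply: PD; first by apply: PA; exact: submxMl.
  by rewrite [y]mx11_scalar mul_scalar_mx; apply: PZ.
have : (A < A + u)%MS.
  rewrite ltmxE addsmxSl /=; apply/negP => /(submx_trans (addsmxSr A u)) uA'.
  by apply: uA; apply/idP.
rewrite ltmxErank => /andP [_ ltAu].
have := rank_leq_col (A + u)%MS; lia.
Qed.

Section Rowspace.
Variables (V : lmodType K) (n : nat) (b : 'I_n -> V) (M : 'M[K]_n).
Variables (S T : V -> Prop).
Hypothesis b_free : forall r, lincomb b r = 0 -> r = 0.
Hypothesis S_lincomb : forall v, S v <-> exists r, v = lincomb b r.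
Hypothesis TM : forall r, T (lincomb b r) <-> (r <= M)%MS.
Hypothesis TS : forall v, T v -> S v.

Lemma has_dim_rowspace : has_dim T (\rank M).
Proof.
apply: (has_dim_basis (b := fun l => lincomb b (row l (row_base M)))).
- by move=> l; apply/TM; rewrite -(eq_row_base M) row_sub.
- move=> c; rewrite -lincomb_mul => /b_free /eqP.
  rewrite mulmx_free_eq0 ?row_base_free // => /eqP /rowP c0 k.
  by have := c0 k; rewrite !mxE.
- move=> v Tv; have [r vE] := (S_lincomb v).1 (TS Tv).
  have /submxP [D rD] : (r <= row_base M)%MS by rewrite eq_row_base -TM -vE.
  exists (fun l => D 0 l); rewrite vE rD -lincomb_mul.
  by congr (lincomb _ (_ *m _)); apply/rowP => l; rewrite mxE.
Qed.

Lemma dim_quot_rowspace : dim_quot S T (\rank M^C).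
Proof.
exists (fun l => lincomb b (row l (row_base (M^C)%MS))); split; last split.
- by move=> l; apply/S_lincomb; eexists.
- move=> c; rewrite -lincomb_mul => /TM cM.
  have : (\row_k c k *m row_base (M^C)%MS <= M :&: M^C)%MS.
    rewrite sub_capmx cM; apply: submx_trans (submxMl _ _) _.
    by rewrite eq_row_base.
  rewrite capmx_compl submx0 mulmx_free_eq0 ?row_base_free // => /eqP /rowP c0 k.
  by have := c0 k; rewrite !mxE.
- move=> v /S_lincomb [r ->].
  have /sub_addsmxP [[x y] /= rE] : (r <= M + M^C)%MS.
    by apply: submx_full; apply: addsmx_compl_full.
  have /submxP [D yD] : (y *m M^C <= row_base (M^C)%MS)%MS by rewrite eq_row_base submxMl.
  exists (fun l => D 0 l).
  have -> : \sum_l D 0 l *: lincomb b (row l (row_base (M^C)%MS)) = lincomb b (y *m (M^C)%MS).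
    rewrite yD -lincomb_mul.
    by congr (lincomb _ (_ *m _)); apply/rowP => l; rewrite mxE.
  by rewrite rE linearD addrK; apply/TM; apply: submxMl.
Qed.

End Rowspace.

Lemma has_dim_quot (V : lmodType K) (S T : V -> Prop) n :
  subspace S -> has_dim S n -> subspace T -> (forall v, T v -> S v) ->
  exists k e, [/\ (k + e = n)%N, has_dim T k & dim_quot S T e].
Proof.
move=> SS /has_dimP [b [Sb b_free b_span]] [T0 TD TZ] TS.
have S_lincomb v : S v <-> exists r, v = lincomb b r.
  split => [/b_span [c ->] | [r ->]]; first by exists (\row_k c k); rewrite lincombE.
  exact: subspace_lincomb.
have lincomb_inj r : lincomb b r = 0 -> r = 0.
  by move=> r0; apply/rowP => k; rewrite mxE (b_free (fun k => r 0 k)).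
have [M TM] : exists M : 'M[K]_n, forall r, T (lincomb b r) <-> (r <= M)%MS.
  apply: (rV_subspace_mx (P := fun r => T (lincomb b r))).
  split => [|u v Tu Tv | c u Tu]; rewrite ?linear0 ?linearD ?linearZ //.
  - exact: TD.
  - exact: TZ.
exists (\rank M), (\rank M^C); split.
- by rewrite mxrank_compl subnKC // rank_leq_col.
- exact: has_dim_rowspace lincomb_inj S_lincomb TM TS.
- exact: dim_quot_rowspace S_lincomb TM.
Qed.

Section RankNullity.
Variables (V W : lmodType K) (f : V -> W) (S : V -> Prop).
Hypotheses (f_linear : linear f) (SS : subspace S).

HB.instance Definition _ := GRing.isLinear.Build K V W *:%R f f_linear.

Lemma subspace_ker : subspace (fun v => S v /\ f v = 0).
Proof.
case: SS => S0 SD SZ; split => [|u v [Su fu] [Sv fv] | c v [Sv fv]].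
- by rewrite linear0.
- by rewrite linearD /= fu fv addr0; auto.
- by rewrite linearZ /= fv scaler0; auto.
Qed.

Lemma rank_nullity k r :
  has_dim (fun v => S v /\ f v = 0) k -> has_dim (fun y => exists2 v, S v & f v = y) r ->
  has_dim S (k + r).
Proof.
move=> /has_dimP [u [keru u_free u_span]] /has_dimP [y [imy y_free y_span]].
have /fin_all_exists [v vP] : forall l, exists x, S x /\ f x = y l.
  by move=> l; have [x Sx fx] := imy l; exists x.
have split_l a : split (lshift r a) = inl a := unsplitK (inl a).
have split_r l : split (rshift k l) = inr l := unsplitK (inr l).
pose z j := match split j with inl a => u a | inr l => v l end.
have sum_z (c : 'I_(k + r) -> K) : \sum_j c j *: z j =
    \sum_a c (lshift r a) *: u a + \sum_l c (rshift k l) *: v l.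
  by rewrite big_split_ord /z; congr (_ + _); apply: eq_bigr => ? _; rewrite ?split_l ?split_r.
have f_sum_v (d : 'I_r -> K) : f (\sum_l d l *: v l) = \sum_l d l *: y l.
  by rewrite linear_sum; apply: eq_bigr => l _; rewrite linearZ /= (vP l).2.
apply: (has_dim_basis (b := z)).
- by move=> j; rewrite /z; case: split => [a|l]; [case: (keru a) | case: (vP l)].
- move=> c; rewrite sum_z => c0.
  have fu0 : f (\sum_a c (lshift r a) *: u a) = 0.
    by rewrite linear_sum big1 // => a _; rewrite linearZ /= (keru a).2 scaler0.
  have cr0 : forall l, c (rshift k l) = 0.
    by apply: y_free; rewrite -f_sum_v -(add0r (f _)) -fu0 -linearD c0 linear0.
  have cl0 : forall a, c (lshift r a) = 0.
    by apply: u_free; rewrite -[RHS]c0 [X in _ = _ + X]big1 ?addr0 // => l _; rewrite cr0 scale0r.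
  by move=> j; case: (split_ordP j) => a ->.
- move=> x Sx.
  have [d fxE] := y_span (f x) (ex_intro2 _ _ x Sx erefl).
  have [|c xE] := u_span (x - \sum_l d l *: v l).
    split; first by apply: subspaceB => //; apply: subspace_lincomb => // l; case: (vP l).
    by rewrite linearB /= f_sum_v fxE subrr.
  exists (fun j => match split j with inl a => c a | inr l => d l end).
  rewrite sum_z; under eq_bigr do rewrite split_l; under [X in _ + X]eq_bigr do rewrite split_r.
  by rewrite -xE subrK.
Qed.

End RankNullity.

Lemma subspace_zero_sp (V : lmodType K) : subspace (@zero_sp K V).
Proof. by split => [|u v -> ->|c v ->]; rewrite /zero_sp ?addr0 ?scaler0. Qed.

Lemma subspace_ffun (V : lmodType K) (A : finType) (S : A -> V -> Prop) :
  (forall a, subspace (S a)) -> subspace (fun w : {ffun A -> V} => forall a, S a (w a)).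
Proof.
move=> SS; split => [a | u v uS vS a | c v vS a]; rewrite ffunE; case: (SS a) => S0 SD SZ //.
- by apply: SD; [apply: uS | apply: vS].
- by apply: SZ; apply: vS.
Qed.

Section FfunSpaces.
Variables (V : lmodType K) (A : finType) (S : A -> V -> Prop) (n : A -> nat).
Hypotheses (SS : forall a, subspace (S a)) (Sn : forall a, has_dim (S a) (n a)).

Let slot (r : seq A) a : V -> Prop := if a \in r then S a else @zero_sp K V.

Let subspace_slot r a : subspace (slot r a).
Proof. by rewrite /slot; case: ifP => _; [apply: SS | apply: subspace_zero_sp]. Qed.

Lemma has_dim_ffun_seq r : uniq r ->
  has_dim (fun w : {ffun A -> V} => forall a, slot r a (w a)) (\sum_(a <- r) n a).
Proof.
elim: r => [_ | a0 r IHr /andP [a0r r_uniq]].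
  rewrite big_nil; apply: eq_has_dim (has_dim0 _) => w; split => [-> a | w0].
    by rewrite ffunE.
  by apply/ffunP => a; rewrite ffunE; apply: w0.
rewrite big_cons addnC.
apply: (rank_nullity (f := fun w : {ffun A -> V} => w a0)).
- by move=> c u v; rewrite !ffunE.
- exact: subspace_ffun (subspace_slot _).
- apply: eq_has_dim (IHr r_uniq) => w; split => [wr | [wr wa0] a].
    have wa0 : w a0 = 0 by have := wr a0; rewrite /slot (negbTE a0r).
    split => // a; rewrite /slot in_cons.
    case: (eqVneq a a0) => [-> | _] /=; last exact: wr.
    by rewrite wa0; case: (SS a0).
  have := wr a; rewrite /slot in_cons.
  by case: eqVneq => [-> | _] //= _; rewrite (negbTE a0r).
- apply: eq_has_dim (Sn a0) => y; split => [Sy | [w wr <-]].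
    exists [ffun a => if a == a0 then y else 0]; last by rewrite ffunE eqxx.
    move=> a; rewrite ffunE /slot in_cons; case: eqVneq => [-> | _] //=.
    by case: ifP => _; [case: (SS a) | ].
  by have := wr a0; rewrite /slot mem_head.
Qed.

Lemma has_dim_ffun :
  has_dim (fun w : {ffun A -> V} => forall a, S a (w a)) (\sum_a n a).
Proof.
rewrite -big_enum; apply: eq_has_dim (has_dim_ffun_seq (enum_uniq A)) => w.
by rewrite /slot; split => wS a; have := wS a; rewrite mem_enum.
Qed.

End FfunSpaces.

End Subspaces.

Section PreprojectiveModules.
Variables (K : fieldType) (I E : finType) (s t : E -> I) (M : pmod K s t).

Lemma ridem_rarr i a (x : M) :
  ridem M i (rarr M a x) = if atgt s t a == i then rarr M a x else 0.
Proof.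
rewrite [in LHS]rarr_supp; case: eqP => [<- | /eqP ne].
  by rewrite ridem_idem -rarr_supp.
by rewrite ridem_orth // eq_sym.
Qed.

Lemma rarr_ridem_src a (x : M) : rarr M a (ridem M (asrc s t a) x) = rarr M a x.
Proof. by rewrite [LHS]rarr_supp [RHS]rarr_supp ridem_idem. Qed.

Lemma rarr_ridem_neq a j (x : M) : asrc s t a != j -> rarr M a (ridem M j x) = 0.
Proof. by move=> ne; rewrite rarr_supp ridem_orth // !linear0. Qed.

Lemma path_act_rcons p a (v : M) : path_act (rcons p a) v = path_act p (rarr M a v).
Proof. by rewrite /path_act foldr_rcons. Qed.

Lemma path_act_cat p q (v : M) : path_act (p ++ q) v = path_act p (path_act q v).
Proof. by rewrite /path_act foldr_cat. Qed.

Lemma path_act0 p : path_act p (0 : M) = 0.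
Proof. by elim: p => //= a p ->; rewrite linear0. Qed.

Lemma path_act_long (v : M) N :
  (forall p, size p = N -> path_act p v = 0) ->
  forall p, (N <= size p)%N -> path_act p v = 0.
Proof.
move=> vN p Np; rewrite -(cat_take_drop (size p - N) p) path_act_cat.
by rewrite vN ?path_act0 // size_drop subKn.
Qed.

End PreprojectiveModules.

Lemma fst_sum (U V : nmodType) (J : Type) (r : seq J) (P : pred J) (F : J -> U * V) :
  (\sum_(j <- r | P j) F j).1 = \sum_(j <- r | P j) (F j).1.
Proof. exact: big_morph. Qed.

Lemma snd_sum (U V : nmodType) (J : Type) (r : seq J) (P : pred J) (F : J -> U * V) :
  (\sum_(j <- r | P j) F j).2 = \sum_(j <- r | P j) (F j).2.
Proof. exact: big_morph. Qed.

(* [one_point_ext] is Q (+) K, with K at vertex i and each arrow a sending (0, 1)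
   to w a; the hypotheses on w are exactly the module axioms. A retraction onto Q,
   which exists when Q is injective, maps (0, 1) to the vector sought. *)
Section OnePointExtension.
Variables (K : fieldType) (I E : finType) (s t : E -> I) (Q : pmod K s t) (i : I).
Variable w : bool * E -> Q.
Hypothesis w_tgt : forall a, ridem Q (atgt s t a) (w a) = w a.
Hypothesis w_src : forall a, asrc s t a != i -> w a = 0.
Hypothesis w_rel : \sum_(e | t e == i) rarr Q (true, e) (w (false, e))
    - \sum_(e | s e == i) rarr Q (false, e) (w (true, e)) = 0.

Definition ext_idem j (x : Q * K^o) : Q * K^o := (ridem Q j x.1, if j == i then x.2 else 0).
Definition ext_arr a (x : Q * K^o) : Q * K^o := (rarr Q a x.1 + x.2 *: w a, 0).

Fact ext_idem_is_linear j : linear (ext_idem j).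
Proof.
move=> c u v; apply: injective_projections; rewrite /= ?linearP //.
by case: (j == i) => //; rewrite scaler0 addr0.
Qed.
HB.instance Definition _ j :=
  GRing.isLinear.Build K (Q * K^o)%type (Q * K^o)%type *:%R (ext_idem j) (ext_idem_is_linear j).

Fact ext_arr_is_linear a : linear (ext_arr a).
Proof.
move=> c u v; apply: injective_projections; rewrite /= ?scaler0 ?addr0 //.
by rewrite linearP scalerDl scalerDr addrACA scalerA.
Qed.
HB.instance Definition _ a :=
  GRing.isLinear.Build K (Q * K^o)%type (Q * K^o)%type *:%R (ext_arr a) (ext_arr_is_linear a).

Fact ext_idem_idem j x : ext_idem j (ext_idem j x) = ext_idem j x.
Proof. by rewrite /ext_idem /= ridem_idem; case: (j == i). Qed.

Fact ext_idem_orth j k x : j != k -> ext_idem j (ext_idem k x) = 0.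
Proof.
move=> jk; apply: injective_projections; rewrite /= ?ridem_orth //.
by case: eqP => [ji|//]; case: eqP => [ki|//]; rewrite ji ki eqxx in jk.
Qed.

Fact ext_idem_sum x : \sum_j ext_idem j x = x.
Proof.
apply: injective_projections; rewrite ?fst_sum ?snd_sum /= ?ridem_sum //.
by rewrite (bigD1 i) //= eqxx big1 ?addr0 // => j /negbTE ->.
Qed.

Fact ext_arr_supp a x :
  ext_arr a x = ext_idem (atgt s t a) (ext_arr a (ext_idem (asrc s t a) x)).
Proof.
apply: injective_projections => /=; last by case: (_ == i).
rewrite linearD linearZ /= -rarr_supp.
have [_ | /w_src ->] := boolP (asrc s t a == i); first by rewrite w_tgt.
by rewrite (scaler0 _ x.2) scale0r.
Qed.

Fact ext_preproj_rel j x :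
  \sum_(e | t e == j) ext_arr (true, e) (ext_arr (false, e) (ext_idem j x))
  - \sum_(e | s e == j) ext_arr (false, e) (ext_arr (true, e) (ext_idem j x)) = 0.
Proof.
apply: injective_projections => /=; rewrite ?fst_sum ?snd_sum /=; last by rewrite !big1 ?subr0.
under eq_bigr do rewrite scale0r addr0 linearD linearZ /=.
under [X in _ - X]eq_bigr do rewrite scale0r addr0 linearD linearZ /=.
rewrite !big_split /= opprD addrACA preproj_rel add0r -!scaler_sumr -scalerBr.
by case: eqP => [-> | _]; rewrite ?w_rel ?scaler0 ?scale0r.
Qed.

Definition one_point_ext : pmod K s t :=
  PMod ext_idem_idem ext_idem_orth ext_idem_sum ext_arr_supp ext_preproj_rel.

Lemma path_act_ext p (v : Q) : path_act (M := one_point_ext) p (v, 0) = (path_act p v, 0).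
Proof.
elim: p => //= a p ->; apply: injective_projections => //=.
by rewrite scale0r addr0.
Qed.

Lemma one_point_ext_loc_nilpotent : loc_nilpotent Q -> loc_nilpotent one_point_ext.
Proof.
move=> Qnil x.
have [N xN] := fin_all_exists (fun a => Qnil (ext_arr a x).1).
exists (\max_a N a).+1 => p.
case/lastP: p => [// | p a]; rewrite size_rcons => -[size_p].
rewrite path_act_rcons.
have -> : rarr one_point_ext a x = ((ext_arr a x).1, 0) by apply: injective_projections.
by rewrite path_act_ext (path_act_long (xN a)) // size_p (bigmax_sup a).
Qed.

Definition ext_incl (v : Q) : Q * K^o := (v, 0).

Fact ext_incl_is_linear : linear ext_incl.
Proof. by move=> c u v; apply: injective_projections; rewrite /= ?scaler0 ?addr0. Qed.
HB.instance Definition _ :=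
  GRing.isLinear.Build K Q (Q * K^o)%type *:%R ext_incl ext_incl_is_linear.

Lemma ln_injective_lift : loc_nilpotent Q -> ln_injective Q ->
  exists v, ridem Q i v = v /\ forall a, rarr Q a v = w a.
Proof.
move=> Qnil Qinj.
have [|||h [[h_idem h_arr] hK]] :=
  Qinj Q one_point_ext ext_incl idfun Qnil (one_point_ext_loc_nilpotent Qnil).
- split=> [j v | a v]; apply: injective_projections => //=; first by case: (_ == i).
  by rewrite scale0r addr0.
- by move=> u v [].
- by [].
exists (h (0, 1)); split; first by rewrite -h_idem /= /ext_idem /= eqxx linear0.
by move=> a; rewrite -h_arr /= /ext_arr /= linear0 add0r scale1r hK.
Qed.

End OnePointExtension.

Lemma sum_arrows (V : nmodType) (E : finType) (F : bool * E -> V) :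
  \sum_a F a = \sum_e F (true, e) + \sum_e F (false, e).
Proof.
rewrite (eq_bigr (fun a => F (a.1, a.2))); last by case.
by rewrite -(pair_bigA _ (fun b e => F (b, e))) big_bool.
Qed.

Section Submodules.
Variables (K : fieldType) (I E : finType) (s t : E -> I) (Q : pmod K s t).
Variable X : Q -> Prop.

Lemma subspace_submodule : submodule X -> subspace X.
Proof. by case. Qed.

Lemma subspace_sub_at j : subspace X -> subspace (sub_at X j).
Proof.
case=> X0 XD XZ; split => [|u v [Xu uj] [Xv vj] | c v [Xv vj]]; split;
  rewrite ?linear0 ?linearD ?linearZ ?uj ?vj; auto.
Qed.

Lemma subspace_rad : subspace X -> subspace (rad_sub X).
Proof.
case=> X0 XD XZ; split.
- by exists (fun=> 0); split => //; rewrite big1 // => a _; rewrite linear0.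
- move=> _ _ [u [Xu ->]] [v [Xv ->]]; exists (fun a => u a + v a); split; first by auto.
  by rewrite -big_split; apply: eq_bigr => a _; rewrite linearD.
- move=> c _ [u [Xu ->]]; exists (fun a => c *: u a); split; first by auto.
  by rewrite scaler_sumr; apply: eq_bigr => a _; rewrite linearZ.
Qed.

Lemma rad_sub_subset : submodule X -> forall v, rad_sub X v -> X v.
Proof.
move=> Xsub v [u [Xu ->]]; apply: subspace_sum (subspace_submodule Xsub) _ => a.
by case: Xsub => _ _ _ _; apply.
Qed.

Lemma subspace_soc_quot_at i : subspace X -> subspace (soc_quot_at X i).
Proof.
case=> X0 XD XZ; split => [|u v [ui Xu] [vi Xv] | c v [vi Xv]]; split.
- by rewrite linear0.
- by move=> a; rewrite linear0.
- by rewrite linearD ui vi.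
- by move=> a; rewrite linearD; apply: XD; [apply: Xu | apply: Xv].
- by rewrite linearZ vi.
- by move=> a; rewrite linearZ; apply: XZ; apply: Xv.
Qed.

Lemma sub_at_rad i v : submodule X -> sub_at (rad_sub X) i v -> sub_at X i v.
Proof. by move=> Xsub [/(rad_sub_subset Xsub) Xv vi]. Qed.

Lemma soc_quot_at_sub i v : submodule X -> sub_at X i v -> soc_quot_at X i v.
Proof. by case=> _ _ _ _ Xarr [Xv vi]; split => // a; apply: Xarr. Qed.

End Submodules.

Section ArrowsAtVertex.
Variables (K : fieldType) (I E : finType) (s t : E -> I) (Q : pmod K s t).
Variables (X : Q -> Prop) (i : I).
Hypothesis Xsub : submodule X.

(* [out_space] is the direct sum of the X_j over the arrows a : i -> j, realised as
   the families indexed by all arrows that vanish off the arrows leaving i. *)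
Definition out_slot a : Q -> Prop :=
  if asrc s t a == i then sub_at X (atgt s t a) else @zero_sp K Q.
Definition out_space (w : {ffun bool * E -> Q}) : Prop := forall a, out_slot a (w a).

Definition rel_map (w : {ffun bool * E -> Q}) : Q :=
  \sum_(e | t e == i) rarr Q (true, e) (w (false, e))
  - \sum_(e | s e == i) rarr Q (false, e) (w (true, e)).

Definition out_arrows (v : Q) : {ffun bool * E -> Q} :=
  [ffun a => if asrc s t a == i then rarr Q a v else 0].

Lemma rel_map_is_linear : linear rel_map.
Proof.
move=> c u v; rewrite /rel_map scalerBr !scaler_sumr.
under eq_bigr do rewrite !ffunE linearP.
under [X in _ - X]eq_bigr do rewrite !ffunE linearP.
by rewrite !big_split /= opprD addrACA.
Qed.

Lemma out_arrows_is_linear : linear out_arrows.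
Proof.
move=> c u v; apply/ffunP => a; rewrite !ffunE.
by case: ifP => _; rewrite ?linearP ?scaler0 ?addr0.
Qed.

Lemma subspace_out_space : subspace out_space.
Proof.
apply: subspace_ffun => a; rewrite /out_slot; case: ifP => _.
  by apply/subspace_sub_at/subspace_submodule.
exact: subspace_zero_sp.
Qed.

Lemma has_dim_out_space (beta : I -> nat) :
  (forall j, has_dim (sub_at X j) (beta j)) ->
  has_dim out_space (\sum_a if asrc s t a == i then beta (atgt s t a) else 0)%N.
Proof.
move=> Xdim; apply: has_dim_ffun => a; rewrite /out_slot; case: ifP => _ //.
  by apply/subspace_sub_at/subspace_submodule.
- exact: subspace_zero_sp.
- exact: has_dim0.
Qed.

Lemma rel_map_image y :
  sub_at (rad_sub X) i y <-> exists2 w, out_space w & rel_map w = y.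
Proof.
have [X0 XD XZ Xidem Xarr] := Xsub.
split => [[[u [Xu ->]] yi] | [w w_out <-]].
- exists [ffun a => if a.1 then if s a.2 == i then - ridem Q (t a.2) (u (false, a.2)) else 0
                   else if t a.2 == i then ridem Q (s a.2) (u (true, a.2)) else 0].
    move=> [[] e]; rewrite /out_slot ffunE /asrc /atgt /=; case: ifP => // _; split.
    + by rewrite -scaleN1r; apply/XZ/Xidem/Xu.
    + by rewrite linearN ridem_idem.
    + by apply/Xidem/Xu.
    + by rewrite ridem_idem.
  rewrite -yi linear_sum sum_arrows /rel_map big_mkcond [X in _ - X]big_mkcond -sumrN.
  congr (_ + _); apply: eq_bigr => e _; rewrite ffunE /= ridem_rarr /atgt /=.
    by case: ifP => ti //; rewrite ti rarr_ridem_src.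
  by case: ifP => si; rewrite ?oppr0 // si linearN opprK rarr_ridem_src.
- have w_X a : asrc s t a == i -> X (w a).
    by move=> ai; move: (w_out a); rewrite /out_slot ai => -[].
  split.
    exists (fun a => if a.1 then if t a.2 == i then w (false, a.2) else 0
                     else if s a.2 == i then - w (true, a.2) else 0); split.
      move=> [[] e] /=; case: ifP => ai //; first exact: w_X.
      by rewrite -scaleN1r; apply/XZ/w_X.
    rewrite sum_arrows /rel_map big_mkcond [X in _ - X]big_mkcond -sumrN /=.
    by congr (_ + _); apply: eq_bigr => e _; case: ifP; rewrite ?linearN ?linear0 ?oppr0.
  rewrite /rel_map linearB; congr (_ - _); rewrite linear_sum; apply: eq_bigr => e e_i;
    by rewrite ridem_rarr /atgt /= e_i.
Qed.

Lemma out_arrows_kernel v : soc_at Q i v <-> soc_quot_at X i v /\ out_arrows v = 0.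
Proof.
split => [[vi v_arr] | [[vi _] v0]].
- split; first by split => // a; rewrite v_arr; case: Xsub.
  by apply/ffunP => a; rewrite !ffunE v_arr; case: ifP.
- split => // a; have [ai | ne] := eqVneq (asrc s t a) i.
    by move/ffunP: v0 => /(_ a); rewrite !ffunE ai eqxx.
  by rewrite -vi rarr_ridem_neq.
Qed.

Lemma out_arrows_image : loc_nilpotent Q -> ln_injective Q -> forall w,
  out_space w /\ rel_map w = 0 <-> exists2 v, soc_quot_at X i v & out_arrows v = w.
Proof.
move=> Qnil Qinj w; split => [[w_out w_rel] | [v [vi v_arr] <-]].
- have w_src a : asrc s t a != i -> w a = 0.
    by move/negbTE => ai; move: (w_out a); rewrite /out_slot ai.
  have w_tgt a : ridem Q (atgt s t a) (w a) = w a.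
    move: (w_out a); rewrite /out_slot; case: ifP => [_ [] // | _ ->].
    by rewrite linear0.
  have w_X a : X (w a).
    move: (w_out a); rewrite /out_slot; case: ifP => [_ [] // | _ ->].
    by case: Xsub.
  have [v [vi v_arr]] := ln_injective_lift w_tgt w_src w_rel Qnil Qinj.
  exists v; first by split => // a; rewrite v_arr.
  by apply/ffunP => a; rewrite ffunE v_arr; case: ifP => // /negbT /w_src ->.
- split.
    move=> a; rewrite /out_slot ffunE; case: ifP => ai; last by [].
    by split; [apply: v_arr | rewrite ridem_rarr eqxx].
  rewrite /rel_map.
  under eq_bigr => e te do rewrite ffunE /asrc /= te.
  under [X in _ - X]eq_bigr => e se do rewrite ffunE /asrc /= se.
  by rewrite -vi preproj_rel.
Qed.

End ArrowsAtVertex.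

Section CartanMatrix.
Variables (I E : finType) (s t : E -> I).
Hypothesis noloop : forall e, s e != t e.

Lemma sum_edges_at (beta : I -> nat) i :
  (\sum_(j | j != i)
     beta j * #|[set e | (s e == j) && (t e == i) || (s e == i) && (t e == j)]|)%N
  = (\sum_a if asrc s t a == i then beta (atgt s t a) else 0)%N.
Proof.
under eq_bigr do rewrite -sum1dep_card big_distrr /= big_mkcond /=.
rewrite exchange_big sum_arrows -big_split /=; apply: eq_bigr => e _.
rewrite /asrc /atgt /=.
have [si | si] := eqVneq (s e) i.
  have ti : t e != i by rewrite -si eq_sym.
  rewrite (negbTE ti) addr0 (bigD1 (t e)) //= si eqxx orbT muln1 big1 ?addn0 // => j /andP [_ jt].
  by rewrite andbF (eq_sym (t e)) (negbTE jt).
have [ti | ti] := eqVneq (t e) i.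
  rewrite add0r (bigD1 (s e)) //= eqxx muln1 big1 ?addn0 // => j /andP [_ js].
  by rewrite eq_sym (negbTE js).
by rewrite addr0 big1 // => j _; rewrite andbF.
Qed.

Lemma sum_beta_cartan (beta : I -> nat) i :
  \sum_j (beta j)%:Z * cartan s t j i =
  (2 * beta i)%:Z - (\sum_a if asrc s t a == i then beta (atgt s t a) else 0)%N%:Z.
Proof.
rewrite -sum_edges_at (big_morph Posz PoszD (erefl 0%:Z)) -sumrN.
rewrite (bigD1 i) //= /cartan eqxx mulnC PoszM; congr (_ + _).
by apply: eq_bigr => j /negbTE ->; rewrite mulrN PoszM.
Qed.

End CartanMatrix.

Theorem mainTheorem6 (R : realType) (I E : finType) (s t : E -> I)
    (noloop : forall e, s e != t e)
    (lam : I -> nat) (Q : pmod R[i] s t)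
    (Qnil : loc_nilpotent Q) (Qinj : ln_injective Q)
    (Qsoc : forall i, dim_quot (soc_at Q i) (@zero_sp _ Q) (lam i))
    (beta : I -> nat) (X : Q -> Prop)
    (Xsub : submodule X) (Xnil : sub_nilpotent X)
    (Xdim : forall i, dim_quot (sub_at X i) (@zero_sp _ Q) (beta i)) :
  forall i : I, exists phi eps : nat,
    [/\ dim_quot (soc_quot_at X i) (sub_at X i) phi,
        dim_quot (sub_at X i) (sub_at (rad_sub X) i) eps &
        (phi%:Z - eps%:Z = (lam i)%:Z - \sum_(j : I) (beta j)%:Z * cartan s t j i)%R].
Proof.
move=> i.
have X_sp := subspace_submodule Xsub.
have rel_lin := rel_map_is_linear (Q := Q) i.
have out_lin := out_arrows_is_linear (Q := Q) i.
have [rad_dim [eps [rad_eps rad_has_dim head_dim]]] :=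
  has_dim_quot (subspace_sub_at i X_sp) (Xdim i) (subspace_sub_at i (subspace_rad X_sp))
    (fun v => sub_at_rad Xsub).
have out_dim := has_dim_out_space i Xsub Xdim.
have [ker_dim [? [_ ker_has_dim _]]] :=
  has_dim_quot (subspace_out_space i Xsub) out_dim
    (subspace_ker rel_lin (subspace_out_space i Xsub)) (fun w wK => wK.1).
have out_dim' := rank_nullity rel_lin (subspace_out_space i Xsub) ker_has_dim
  (eq_has_dim (rel_map_image i Xsub) rad_has_dim).
have socq_dim := rank_nullity out_lin (subspace_soc_quot_at i X_sp)
  (eq_has_dim (out_arrows_kernel i Xsub) (Qsoc i))
  (eq_has_dim (out_arrows_image i Xsub Qnil Qinj) ker_has_dim).
have [Xi_dim [phi [Xi_phi Xi_has_dim soc_dim]]] :=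
  has_dim_quot (subspace_soc_quot_at i X_sp) socq_dim (subspace_sub_at i X_sp)
    (fun v => soc_quot_at_sub Xsub).
exists phi, eps; split => //.
have := has_dim_uniq out_dim' out_dim; have := has_dim_uniq Xi_has_dim (Xdim i).
rewrite sum_beta_cartan //; lia.
Qed.
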